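(* Let $(G,\sigma)$ be a signed graph, $p\ge2$, $K\in\mathbb{R}$, $N\in(0,\infty]$ and $x\in V$. Then $(G,\sigma)$ satisfies $CD_p^\sigma(K,N)$ at $x$ if and only if \[ \Gamma_{p,2}^{\sigma}(f,f)(x)\geq\frac{1}{N}(\Delta_{p}^{\sigma}f(x))^{2}+K(\Gamma^{\sigma}_{p}(f,f)(x))^{\frac{2p-2}{p}} \] holds for every function $f:V\to\mathbb{R}$.
   Context: $G=(V,E)$ is a locally finite simple graph with degrees $d_x$; $\sigma:E\to\{\pm1\}$, $\sigma_{xy}=\sigma(\{x,y\})$. For $p>1$: $\Delta_{p}^{\sigma}f(x)=\frac{1}{d_{x}}\sum_{y\sim x}|\sigma_{xy}f(y)-f(x)|^{p-2}(\sigma_{xy}f(y)-f(x))$ (with $|t|^{p-2}t=0$ at $t=0$); $\Gamma_p^\sigma(f,g)(x)=\frac{1}{2d_{x}}\sum_{y\sim x}|\sigma_{xy}f(y)-f(x)|^{p-2}(\sigma_{xy}f(y)-f(x))(\sigma_{xy}g(y)-g(x))$; $\mathscr{L}^\sigma_{p,f}\varphi(x)=\frac{1}{d_{x}}\sum_{y\sim x}|\sigma_{xy}f(y)-f(x)|^{p-2}(\varphi(y)-\varphi(x))$; $\Gamma_{p,2}^\sigma(f,f)(x)=\frac12\mathscr{L}_{p,f}^\sigma(\Gamma^\sigma_p(f,f))(x)-\Gamma_p^\sigma(f,\Delta_p^\sigma f)(x)$. $(G,\sigma)$ satisfies $CD_p^\sigma(K,N)$ at $x$ if the displayed inequality holds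 for every $f:V\to\mathbb{R}$ with $\sigma_{xy}f(y)-f(x)\neq0$ for every neighbor $y\sim x$ ($\frac1N=0$ if $N=\infty$). *)

From HB Require Import structures.
From mathcomp Require Import all_boot all_order all_algebra.
From mathcomp Require Import all_classical all_reals exp.
Set Implicit Arguments. Unset Strict Implicit. Unset Printing Implicit Defensive.
Import Order.TTheory GRing.Theory Num.Theory.
Local Open Scope ring_scope.

(* A locally finite simple signed graph on vertex type V:
   nbrs x is the (finite, duplicate-free) list of neighbours of x;
   adjacency is symmetric and loop-free; sgn x y is sigma({x,y}) in {+1,-1}. *)
Record signed_graph (V : eqType) (R : realType) := SignedGraph {
  nbrs : V -> seq V;
  nbrs_uniq : forall x, uniq (nbrs x);
  nbrs_sym : forall x y, (y \in nbrs x) = (x \in nbrs y);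
  nbrs_irr : forall x, x \notin nbrs x;
  sgn : V -> V -> R;
  sgn_sym : forall x y, y \in nbrs x -> sgn x y = sgn y x;
  sgn_pm : forall x y, y \in nbrs x -> sgn x y = 1 \/ sgn x y = -1
}.

Section Ops.
Variables (V : eqType) (R : realType) (G : signed_graph V R) (p : R).

Definition deg (x : V) : R := (size (nbrs G x))%:R.

Definition dlt (f : V -> R) (x y : V) : R := sgn G x y * f y - f x.

(* |t|^(p-2) t  (equals 0 at t = 0) *)
Definition pw (t : R) : R := `|t| `^ (p - 2) * t.

Definition sLap (f : V -> R) (x : V) : R :=
  (deg x)^-1 * \sum_(y <- nbrs G x) pw (dlt f x y).

Definition sGam (f g : V -> R) (x : V) : R :=
  (2 * deg x)^-1 * \sum_(y <- nbrs G x) pw (dlt f x y) * dlt g x y.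

Definition sLop (f phi : V -> R) (x : V) : R :=
  (deg x)^-1 * \sum_(y <- nbrs G x) `|dlt f x y| `^ (p - 2) * (phi y - phi x).

Definition sGam2 (f : V -> R) (x : V) : R :=
  2^-1 * sLop f (sGam f f) x - sGam f (sLap f) x.

Definition invN (N : \bar R) : R :=
  match N with EFin r => r^-1 | _ => 0 end.

Definition CD_ineq (K : R) (N : \bar R) (f : V -> R) (x : V) : Prop :=
  invN N * (sLap f x) ^+ 2 + K * (sGam f f x) `^ ((2 * p - 2) / p) <= sGam2 f x.

Definition CDp (K : R) (N : \bar R) (x : V) : Prop :=
  forall f : V -> R, (forall y, y \in nbrs G x -> dlt f x y != 0) -> CD_ineq K N f x.

End Ops.

(* An arbitrary [f] is the limit, as [e -> 0+], of
   [f + e 1_x], whose differences [sigma_xy f(y) - f(x) - e] at [x] all avoid 0 for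
   small [e > 0]. Since [p >= 2], [t |-> |t|^(p-2)] is continuous, so both sides of
   the inequality are continuous in [e] and the inequality passes to the limit. *)
From HB Require Import structures.
From mathcomp Require Import all_boot all_order all_algebra.
From mathcomp Require Import all_classical all_reals exp.
From mathcomp Require Import topology normedtype derive.
Import Order.TTheory GRing.Theory Num.Theory.
Import numFieldNormedType.Exports.
Local Open Scope ring_scope.
Local Open Scope classical_set_scope.

Section real_continuity.
Context {R : realType} {T : topologicalType}.

Lemma continuous_normr_powR (c : R) (h : T -> R) :
  0 <= c -> continuous h -> continuous (fun t => `|h t| `^ c).
Proof.
move=> c_ge0 h_cont t0.
suff normr_powR_cont : continuous (fun t : R => `|t| `^ c).
  exact: (continuous_comp (h_cont t0) (normr_powR_cont (h t0))).
move=> t; move: c_ge0; rewrite le_eqVlt => /predU1P[<-|c_gt0].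
  by under eq_fun do rewrite powRr0; exact: cvg_cst.
have [->|t_neq0] := eqVneq t 0.
  rewrite /continuous_at normr0 powR0 ?gt_eqF//.
  apply/cvgrPdist_lt => e e_gt0; near=> z.
  rewrite sub0r normrN ger0_norm ?powR_ge0//.
  have -> : e = (e `^ c^-1) `^ c by rewrite -powRrM mulVf ?gt_eqF// powRr1// ltW.
  rewrite gt0_ltr_powR ?nnegrE ?powR_ge0//; near: z.
  exact: (nbhs0_lt (V:=R^o)) (powR_gt0 _ _).
have powR_cont : {for `|t|, continuous (fun a : R => a `^ c)}.
  apply: differentiable_continuous; apply/derivable1_diffP.
  by apply: (@derivable_powR R 1 c); rewrite in_itv/= andbT normr_gt0.
exact: (continuous_comp (@norm_continuous _ R^o t) powR_cont).
Unshelve. all: by end_near.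
Qed.

Lemma continuous_sum (I : Type) (s : seq I) (F : I -> T -> R) :
  (forall i, continuous (F i)) -> continuous (fun t => \sum_(i <- s) F i t).
Proof.
by move=> F_cont; apply: continuous_big => [|i _]; [exact: add_continuous|exact: F_cont].
Qed.

End real_continuity.

Section signed_graph_operators.
Context {R : realType} {V : eqType} (G : signed_graph V R) (p : R).

Lemma sGam_ge0 (f : V -> R) (x : V) : 0 <= sGam G p f f x.
Proof.
rewrite /sGam mulr_ge0 ?invr_ge0 ?mulr_ge0 ?ler0n//.
by apply: sumr_ge0 => y _; rewrite /pw -mulrA mulr_ge0 ?powR_ge0// -expr2 sqr_ge0.
Qed.

Lemma dlt_bump (f : V -> R) (e : R) (x y : V) : y \in nbrs G x ->
  dlt G (fun v => f v + e * (v == x)%:R) x y = dlt G f x y - e.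
Proof.
move=> y_nbr; have y_neq_x : y != x by apply: contraTneq y_nbr => ->; exact: nbrs_irr.
by rewrite /dlt (negbTE y_neq_x) eqxx mulr0 addr0 mulr1 opprD addrA.
Qed.

Hypothesis p_ge2 : 2 <= p.
Let p_sub2_ge0 : 0 <= p - 2. Proof. by rewrite subr_ge0. Qed.

Variable f : R -> V -> R.
Hypothesis f_cont : forall v, continuous (f^~ v).

Lemma continuous_dlt (x y : V) : continuous (fun e => dlt G (f e) x y).
Proof.
by move=> e; apply: cvgB; [apply: cvgM; first exact: cvg_cst|]; exact: f_cont.
Qed.

Lemma continuous_pw_dlt (x y : V) : continuous (fun e => pw p (dlt G (f e) x y)).
Proof.
move=> e; apply: cvgM; last exact: continuous_dlt.
exact: (continuous_normr_powR _ _ p_sub2_ge0 (continuous_dlt x y) e).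
Qed.

Lemma continuous_sLap (x : V) : continuous (fun e => sLap G p (f e) x).
Proof.
move=> e; apply: cvgM; first exact: cvg_cst.
by apply: continuous_sum => y; exact: continuous_pw_dlt.
Qed.

Lemma continuous_sGam (x : V) (g : R -> V -> R) : (forall v, continuous (g^~ v)) ->
  continuous (fun e => sGam G p (f e) (g e) x).
Proof.
move=> g_cont e; apply: cvgM; first exact: cvg_cst; apply: continuous_sum => y {}e.
apply: cvgM; first exact: continuous_pw_dlt.
by apply: cvgB; [apply: cvgM; first exact: cvg_cst|]; exact: g_cont.
Qed.

Lemma continuous_sLop (x : V) (phi : R -> V -> R) : (forall v, continuous (phi^~ v)) ->
  continuous (fun e => sLop G p (f e) (phi e) x).
Proof.
move=> phi_cont e; apply: cvgM; first exact: cvg_cst; apply: continuous_sum => y {}e.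
apply: cvgM; last by apply: cvgB; exact: phi_cont.
exact: (continuous_normr_powR _ _ p_sub2_ge0 (continuous_dlt x y) e).
Qed.

Lemma continuous_sGam2 (x : V) : continuous (fun e => sGam2 G p (f e) x).
Proof.
move=> e; apply: cvgB.
  apply: cvgM; first exact: cvg_cst.
  by apply: continuous_sLop => v; exact: continuous_sGam.
by apply: continuous_sGam => v; exact: continuous_sLap.
Qed.

Lemma CD_ineq_at_right0 K N x :
  (\forall e \near 0^'+, CD_ineq G p K N (f e) x) -> CD_ineq G p K N (f 0) x.
Proof.
apply: ler_cvg_to; apply: cvg_at_right_filter; last exact: continuous_sGam2.
apply: cvgD; (apply: cvgM; first exact: cvg_cst).
  by rewrite expr2; under eq_fun do rewrite expr2; apply: cvgM; exact: continuous_sLap.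
(* [powR] jumps to 1 on negative bases, so [sGam >= 0] is needed for continuity. *)
under eq_fun do rewrite -[sGam _ _ _ _ _](ger0_norm (sGam_ge0 _ _)).
rewrite -[sGam _ _ _ _ _](ger0_norm (sGam_ge0 _ _)).
have exponent_ge0 : 0 <= (2 * p - 2) / p.
  rewrite divr_ge0 ?subr_ge0 ?(le_trans _ p_ge2)// -[leLHS]mulr1.
  by rewrite ler_pM2l// (le_trans _ p_ge2)// ler1n.
exact: (continuous_normr_powR _ _ exponent_ge0 (continuous_sGam x _ f_cont) 0).
Qed.

End signed_graph_operators.

Lemma nbhs_right_notin (R : realFieldType) (x : R) (s : seq R) :
  \forall e \near x^'+, e \notin s.
Proof.
elim: s => [|a s IH]; first exact: nearW.
have neq_a : \forall e \near x^'+, e != a.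
  have [x_lt_a|a_le_x] := ltP x a.
    by near=> e; rewrite lt_eqF//; near: e; exact: nbhs_right_lt.
  by near=> e; rewrite gt_eqF// (le_lt_trans a_le_x)//; near: e; exact: nbhs_right_gt.
by near=> e; rewrite in_cons negb_or; apply/andP; split; near: e.
Unshelve. all: by end_near.
Qed.

Theorem proposition4p9 (R : realType) (V : eqType) (G : signed_graph V R)
  (p K : R) (N : \bar R) (x : V) :
  2 <= p -> (0 < N)%E ->
  (CDp G p K N x <-> forall f : V -> R, CD_ineq G p K N f x).
Proof.
move=> p_ge2 _; split=> [CD f|CD f _]; last exact: CD.
pose f_ e v := f v + e * (v == x)%:R.
have f_cont v : continuous (f_^~ v).
  by move=> e; apply: cvgD; [exact: cvg_cst|apply: cvgM; [exact: cvg_id|exact: cvg_cst]].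
have -> : f = f_ 0 by apply/funext => v; rewrite /f_ mul0r addr0.
apply: (CD_ineq_at_right0 G p p_ge2 f_ f_cont).
near=> e; apply: CD => y y_nbr; rewrite dlt_bump// subr_eq0.
apply: contraTneq (map_f (dlt G f x) y_nbr) => ->.
by near: e; exact: nbhs_right_notin.
Unshelve. all: by end_near.
Qed.
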